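(* Let $(A,\circ)$ be an anti-pre-Lie algebra with sub-adjacent Lie algebra $(A,[-,-])$, $[x,y]=x\circ y-y\circ x$. Then there exists a nondegenerate bilinear form $\mathcal B$ on $A$ which is invariant on $(A,\circ)$, i.e. $\mathcal B(x\circ y,z)=\mathcal B(y,[x,z])$ for all $x,y,z\in A$, if and only if the representations $(-\mathcal L_\circ,A)$ and $(\mathrm{ad}^*,A^* )$ of the Lie algebra $(A,[-,-])$ are equivalent.
   Context: All vector spaces are finite-dimensional over a field $\mathbb F$ of characteristic $0$. An anti-pre-Lie algebra is a vector space $A$ with a bilinear operation $\circ$ such that, writing $[x,y]=x\circ y-y\circ x$, for all $x,y,z\in A$: (i) $x\circ(y\circ z)-y\circ(x\circ z)=[y,x]\circ z$, and (ii) $[x,y]\circ z+[y,z]\circ x+[z,x]\circ y=0$; then $(A,[-,-])$ is a Lie algebra. $\mathcal L_\circ(x)y=x\circ y$; $(-\mathcal L_\circ,A)$ is a representation of $(A,[-,-])$. $\mathrm{ad}^*$ is the coadjoint representation: $\langle \mathrm{ad}^*(x)a^*,y\rangle=-\langle a^*,[x,y]\rangle$. Two representations $(\rho_1,V_1),(\rho_2,V_2)$ are equivalent if there is a linear isomorphism $\varphi:V_1\to V_2$ with $\varphi(\rho_1(x)v)=\rho_2(x)\varphi(v)$. *)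

From HB Require Import structures.
From mathcomp Require Import all_boot all_order all_algebra.
Set Implicit Arguments. Unset Strict Implicit. Unset Printing Implicit Defensive.
Import GRing.Theory.
Local Open Scope ring_scope.

Section AntiPreLie.
Variables (F : fieldType) (V : vectType F).

Definition bilinear_op (mul : V -> V -> V) : Prop :=
  (forall (a : F) x y z, mul (a *: x + y) z = a *: mul x z + mul y z) /\
  (forall (a : F) x y z, mul z (a *: x + y) = a *: mul z x + mul z y).

Definition lie_bracket (mul : V -> V -> V) (x y : V) : V := mul x y - mul y x.

Definition anti_pre_Lie (mul : V -> V -> V) : Prop :=
  bilinear_op mul /\
  (forall x y z, mul x (mul y z) - mul y (mul x z) = mul (lie_bracket mul y x) z) /\
  (forall x y z, mul (lie_bracket mul x y) z + mul (lie_bracket mul y z) x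
                 + mul (lie_bracket mul z x) y = 0).

Definition is_bilinear_form (B : V -> V -> F) : Prop :=
  (forall (a : F) x y z, B (a *: x + y) z = a * B x z + B y z) /\
  (forall (a : F) x y z, B z (a *: x + y) = a * B z x + B z y).

Definition is_nondegenerate (B : V -> V -> F) : Prop :=
  forall x, (forall y, B x y = 0) -> x = 0.

Definition is_invariant_form (mul : V -> V -> V) (B : V -> V -> F) : Prop :=
  forall x y z, B (mul x y) z = B y (lie_bracket mul x z).

Definition dualV := 'Hom(V, F^o).

Definition coadjoint (mul : V -> V -> V) (x : V) (f : dualV) : dualV :=
  linfun (fun y : V => - f (lie_bracket mul x y) : F^o).

Definition neg_left_mult (mul : V -> V -> V) (x v : V) : V := - mul x v.

End AntiPreLie.

Definition equivalent_reps (F : fieldType) (L W1 W2 : lmodType F)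
  (rho1 : L -> W1 -> W1) (rho2 : L -> W2 -> W2) : Prop :=
  exists phi : W1 -> W2,
    linear phi /\ bijective phi /\
    forall x v, phi (rho1 x v) = rho2 x (phi v).

From HB Require Import structures.
From mathcomp Require Import all_boot all_order all_algebra.
Import GRing.Theory.
Local Open Scope ring_scope.

(** A bilinear form [B] on [A] is the same thing as a linear map [v |-> B v]
    from [A] to [A^*], which is an isomorphism exactly when [B] is
    nondegenerate, since [A] and [A^*] have the same dimension. Read through
    this map, [B(x o v, y) = B(v, [x, y])] says precisely that [-L(x)] is
    carried to [ad^*(x)]. Neither the characteristic nor the anti-pre-Lie
    identities play a role: bilinearity of [o] suffices. *)

Section LinearMaps.
Variables (F : fieldType) (U W : vectType F).

Section Linfun.
Variable f : U -> W.
Hypothesis f_lin : linear f.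
HB.instance Definition _ := GRing.isLinear.Build F U W *:%R f f_lin.

Lemma linfun_linearE : linfun f =1 f.
Proof. exact: lfunE. Qed.
End Linfun.

Lemma lker0_bijective (f : 'Hom(U, W)) :
  lker f == 0%VS -> dim U = dim W -> bijective f.
Proof.
move=> kerf0 dimUW.
have limgf : limg f = fullv.
  apply/eqP; rewrite eqEdim subvf /= limg_dim_eq ?(eqP kerf0) ?capv0 //.
  by rewrite !dimvf dimUW.
exists (f^-1)%VF; first exact: lker0_lfunK.
by move=> w; rewrite limg_lfunVK // limgf memvf.
Qed.
End LinearMaps.

Arguments linfun_linearE {F U W f}.
Arguments lker0_bijective {F U W f}.

Section FormsAndDuals.
Variables (F : fieldType) (V : vectType F).

Lemma dim_dual : dim (dualV V) = dim V.
Proof. exact: muln1. Qed.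

Definition dual_of_form (B : V -> V -> F) (v : V) : dualV V :=
  linfun (B v : V -> F^o).

Definition form_of_dual (phi : V -> dualV V) (u v : V) : F := phi u v.

Section BilinearForm.
Variable B : V -> V -> F.
Hypothesis B_bil : is_bilinear_form B.

Lemma form_linearl y : linear (B ^~ y : V -> F^o).
Proof. by move=> a u w; rewrite B_bil.1. Qed.

Lemma form_linearr v : linear (B v : V -> F^o).
Proof. by move=> a u w; rewrite B_bil.2. Qed.

Lemma form_oppl u y : B (- u) y = - B u y.
Proof. by rewrite -!(linfun_linearE (form_linearl y)) raddfN. Qed.

Lemma dual_of_formE v y : dual_of_form B v y = B v y.
Proof. exact: (linfun_linearE (form_linearr v)). Qed.

Lemma dual_of_form_linear : linear (dual_of_form B).
Proof.
move=> a u w; apply/lfunP => y.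
by rewrite add_lfunE scale_lfunE !dual_of_formE B_bil.1.
Qed.

Lemma dual_of_form_bijective : is_nondegenerate B -> bijective (dual_of_form B).
Proof.
move=> B_nd; pose phi := linfun (dual_of_form B) : 'Hom(V, dualV V).
have phiE := linfun_linearE dual_of_form_linear.
suff kerphi0 : lker phi == 0%VS.
  by move/eq_bij: (lker0_bijective kerphi0 (esym dim_dual)); apply.
rewrite -subv0; apply/subvP => v; rewrite memv_ker memv0 phiE => /eqP Bv0.
by apply/eqP/B_nd => y; rewrite -dual_of_formE Bv0 zero_lfunE.
Qed.
End BilinearForm.

Section DualMap.
Variable phi : V -> dualV V.
Hypothesis phi_lin : linear phi.

Lemma form_of_dual_bilinear : is_bilinear_form (form_of_dual phi).
Proof.
split=> a x y z; rewrite /form_of_dual; last by rewrite linearP.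
by rewrite phi_lin add_lfunE scale_lfunE.
Qed.

Lemma form_of_dual_nondegenerate :
  injective phi -> is_nondegenerate (form_of_dual phi).
Proof.
have phi0 : phi 0 = 0 by rewrite -(linfun_linearE phi_lin) raddf0.
move=> phi_inj x phix0; apply: phi_inj; rewrite phi0.
by apply/lfunP => y; rewrite zero_lfunE; apply: phix0.
Qed.

Lemma dual_of_formK : dual_of_form (form_of_dual phi) =1 phi.
Proof.
move=> v; apply/lfunP => y.
by rewrite (dual_of_formE _ form_of_dual_bilinear).
Qed.
End DualMap.

Arguments form_of_dual_bilinear {phi}.

Section Intertwining.
Variable mul : V -> V -> V.
Hypothesis mul_bil : bilinear_op mul.

Lemma lie_bracket_linear x : linear (lie_bracket mul x).
Proof.
move=> a u w; rewrite /lie_bracket mul_bil.1 mul_bil.2.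
by rewrite opprD addrACA -scalerBr.
Qed.

Lemma coadjointE x (g : dualV V) y :
  coadjoint mul x g y = - g (lie_bracket mul x y).
Proof.
apply: linfun_linearE => a u w /=.
by rewrite lie_bracket_linear linearP opprD -scalerN.
Qed.

Lemma invariant_form_iff_intertwining (B : V -> V -> F) :
  is_bilinear_form B ->
  is_invariant_form mul B <->
  forall x v, dual_of_form B (neg_left_mult mul x v)
              = coadjoint mul x (dual_of_form B v).
Proof.
move=> B_bil; split=> [B_inv x v | B_int x v y].
  apply/lfunP => y.
  by rewrite coadjointE !dual_of_formE // form_oppl // B_inv.
have /lfunP/(_ y) := B_int x v.
rewrite coadjointE !dual_of_formE // form_oppl // => /eqP.
by rewrite eqr_opp => /eqP.
Qed.

Lemma invariant_form_iff_equivalent_reps :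
  (exists B : V -> V -> F,
      is_bilinear_form B /\ is_nondegenerate B /\ is_invariant_form mul B)
  <->
  equivalent_reps (neg_left_mult mul) (coadjoint mul).
Proof.
split=> [[B [B_bil [B_nd B_inv]]] | [phi [phi_lin [phi_bij phi_int]]]].
  exists (dual_of_form B); split; first exact: dual_of_form_linear.
  split; first exact: dual_of_form_bijective.
  exact/invariant_form_iff_intertwining.
have B_bil := form_of_dual_bilinear phi_lin.
exists (form_of_dual phi); split=> //; split.
  exact/form_of_dual_nondegenerate/bij_inj.
by apply/invariant_form_iff_intertwining => // x v; rewrite !dual_of_formK.
Qed.
End Intertwining.
End FormsAndDuals.

Theorem proposition2p24 (F : fieldType) (V : vectType F)
  (mul : V -> V -> V) :
  [pchar F] =i pred0 ->
  anti_pre_Lie mul ->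
  (exists B : V -> V -> F,
      is_bilinear_form B /\ is_nondegenerate B /\ is_invariant_form mul B)
  <->
  equivalent_reps (neg_left_mult mul) (coadjoint mul).
Proof.
move=> _ [mul_bil _].
exact: invariant_form_iff_equivalent_reps.
Qed.
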